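(* Let $A$ be a non-empty set, $I$ a non-empty index set, $\{V_i\}_{i\in I}\subseteq\mathcal R(A)$, $E$ a fuzzy equivalence on $A$, and $(A/E,I,V_i^{A/E})$ the quotient fuzzy relational system of $(A,I,V_i)$ with respect to $E$. Then the fuzzy relation $E^\natural\in\mathcal R(A,A/E)$ defined by $E^\natural(a_1,E_{a_2})=E(a_1,a_2)$ for all $a_1,a_2\in A$ is a uniform fuzzy relation whose kernel is $E$. Moreover, $E^\natural$ is a solution both to $WL^{2\text{-}1}(A,A/E,I,V_i,V_i^{A/E})$ and to $WL^{2\text{-}2}(A,A/E,I,V_i,V_i^{A/E})$.
   Context: $\mathcal L=(L,\wedge,\vee,\otimes,\to,0,1)$ is a complete residuated lattice; $x\leftrightarrow y=(x\to y)\wedge(y\to x)$. For non-empty sets $X,Y$, $\mathcal R(X,Y)$ is the set of fuzzy relations $X\times Y\to L$, $\mathcal R(X)=\mathcal R(X,X)$, ordered pointwise; $R^{-1}(y,x)=R(x,y)$; $(R\circ S)(x,t)=\bigvee_{y}R(x,y)\otimes S(y,t)$. A fuzzy equivalence $E$ on $A$ is a fuzzy relation that is reflexive ($E(a,a)=1$), symmetric and transitive ($E(a,b)\otimes E(b,c)\le E(a,c)$). For $a\in A$, $E_a$ is the fuzzy subset $x\mapsto E(a,x)$, and $A/E=\{E_a:a\in A\}$. The quotient fuzzy relational system is $(A/E,I,V_i^{A/E})$ with $V_i^{A/E}(E_{a_1},E_{a_2})=(E\circ V_i\circ E)(a_1,a_2)$ (well defined). For $R\in\mathcal R(X,Y)$: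 kernel $E_X^R(x_1,x_2)=\bigwedge_{y}R(x_1,y)\leftrightarrow R(x_2,y)$, co-kernel $E_Y^R(y_1,y_2)=\bigwedge_xR(x,y_1)\leftrightarrow R(x,y_2)$. $R$ is a uniform fuzzy relation if for every $x$ there is $y$ with $R(x,y)=1$, for every $y$ there is $x$ with $R(x,y)=1$, and $R(x,y_1)\otimes R(x,y_2)\le E_Y^R(y_1,y_2)$ for all $x,y_1,y_2$. Heterogeneous systems (given non-empty sets $P,Q$, $\{V_i\}\subseteq\mathcal R(P)$, $\{W_i\}\subseteq\mathcal R(Q)$, unknown $U\in\mathcal R(P,Q)$, with the bound $U\le Z$ trivial since $Z$ is omitted, i.e. constant $1$): $WL^{2\text{-}1}(P,Q,I,V_i,W_i)$: $U^{-1}\circ V_i\le W_i\circ U^{-1}$ for all $i\in I$; $WL^{2\text{-}2}(P,Q,I,V_i,W_i)$: $V_i\circ U\le U\circ W_i$ for all $i\in I$. *)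

From Stdlib Require Import ClassicalEpsilon.

Record CRL := {
  car :> Type;
  le : car -> car -> Prop;
  le_refl : forall x, le x x;
  le_antisym : forall x y, le x y -> le y x -> x = y;
  le_trans : forall x y z, le x y -> le y z -> le x z;
  sup : (car -> Prop) -> car;
  sup_ub : forall (S : car -> Prop) x, S x -> le x (sup S);
  sup_least : forall (S : car -> Prop) y, (forall x, S x -> le x y) -> le (sup S) y;
  inf : (car -> Prop) -> car;
  inf_lb : forall (S : car -> Prop) x, S x -> le (inf S) x;
  inf_greatest : forall (S : car -> Prop) y, (forall x, S x -> le y x) -> le y (inf S);
  zero : car;
  one : car;
  zero_bot : forall x, le zero x;
  one_top : forall x, le x one;
  mul : car -> car -> car;
  res : car -> car -> car;
  mulA : forall x y z, mul x (mul y z) = mul (mul x y) z;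
  mulC : forall x y, mul x y = mul y x;
  mul1 : forall x, mul x one = x;
  adjoint : forall x y z, le (mul x y) z <-> le x (res y z)
}.

Arguments le {_} _ _.
Arguments sup {_} _.
Arguments inf {_} _.
Arguments zero {_}.
Arguments one {_}.
Arguments mul {_} _ _.
Arguments res {_} _ _.

Section Fuzzy.
Variable L : CRL.

Definition meet (x y : L) : L := inf (fun z => z = x \/ z = y).
Definition join (x y : L) : L := sup (fun z => z = x \/ z = y).
Definition biimp (x y : L) : L := meet (res x y) (res y x).

Definition bigsup {I : Type} (f : I -> L) : L := sup (fun z => exists i, z = f i).
Definition biginf {I : Type} (f : I -> L) : L := inf (fun z => exists i, z = f i).

Definition frel (X Y : Type) := X -> Y -> L.
Definition frel_le {X Y : Type} (R S : frel X Y) : Prop :=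
  forall x y, le (R x y) (S x y).
Definition finv {X Y : Type} (R : frel X Y) : frel Y X := fun y x => R x y.
Definition fcomp {X Y Z : Type} (R : frel X Y) (S : frel Y Z) : frel X Z :=
  fun x t => bigsup (fun y : Y => mul (R x y) (S y t)).

Definition fuzzy_equiv {A : Type} (E : frel A A) : Prop :=
  (forall a, E a a = one) /\
  (forall a b, E a b = E b a) /\
  (forall a b c, le (mul (E a b) (E b c)) (E a c)).

Definition kernel {X Y : Type} (R : frel X Y) : frel X X :=
  fun x1 x2 => biginf (fun y : Y => biimp (R x1 y) (R x2 y)).
Definition cokernel {X Y : Type} (R : frel X Y) : frel Y Y :=
  fun y1 y2 => biginf (fun x : X => biimp (R x y1) (R x y2)).

Definition uniform {X Y : Type} (R : frel X Y) : Prop :=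
  (forall x, exists y, R x y = one) /\
  (forall y, exists x, R x y = one) /\
  (forall x y1 y2, le (mul (R x y1) (R x y2)) (cokernel R y1 y2)).

(* Weakly linear systems WL^{2-1} and WL^{2-2} (no upper bound Z) *)
Definition WL21 {P Q I : Type} (V : I -> frel P P) (W : I -> frel Q Q)
  (U : frel P Q) : Prop :=
  forall i, frel_le (fcomp (finv U) (V i)) (fcomp (W i) (finv U)).
Definition WL22 {P Q I : Type} (V : I -> frel P P) (W : I -> frel Q Q)
  (U : frel P Q) : Prop :=
  forall i, frel_le (fcomp (V i) U) (fcomp U (W i)).

(* Quotient set A/E = { E_a | a in A }, E_a = fun x => E a x *)
Definition quot {A : Type} (E : frel A A) : Type :=
  { f : A -> L | exists a, f = E a }.
Definition cls {A : Type} (E : frel A A) (a : A) : quot E :=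
  exist _ (E a) (ex_intro _ a eq_refl).
Definition repr {A : Type} {E : frel A A} (c : quot E) : A :=
  proj1_sig (constructive_indefinite_description _ (proj2_sig c)).

Definition quot_rel {A : Type} (E : frel A A) (V : frel A A) : frel (quot E) (quot E) :=
  fun c1 c2 => fcomp (fcomp E V) E (repr c1) (repr c2).

Definition natural {A : Type} (E : frel A A) : frel A (quot E) :=
  fun a1 c => E a1 (repr c).

End Fuzzy.

Arguments meet {_} _ _.
Arguments join {_} _ _.
Arguments biimp {_} _ _.

From Stdlib Require Import ClassicalEpsilon.

(* Since [E^natural(a1, E_a2) = E(a1, a2)] and [E(a, a) = 1], every element
   is related with degree 1 to its own class; transitivity of [E] then gives
   the uniformity inequality and the kernel, and both weakly linear
   inequalities hold by choosing the class of the target element (resp. the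
   source element) as the intermediate point of the right-hand composition. *)

Section ResiduatedLattice.
Variable L : CRL.

Lemma mul1l (x : L) : mul one x = x.
Proof. rewrite mulC. apply mul1. Qed.

Lemma mul_le_mono_r (x y z : L) : le x y -> le (mul x z) (mul y z).
Proof.
  intro Hxy. apply adjoint. apply le_trans with y; [exact Hxy|].
  apply adjoint. apply le_refl.
Qed.

Lemma le_bigsup {I : Type} (f : I -> L) (x : L) (i : I) :
  le x (f i) -> le x (bigsup L f).
Proof. intro Hx. apply le_trans with (f i); [exact Hx|]. apply sup_ub. eauto. Qed.

Lemma bigsup_le {I : Type} (f : I -> L) (y : L) :
  (forall i, le (f i) y) -> le (bigsup L f) y.
Proof. intro Hf. apply sup_least. intros x [i ->]. apply Hf. Qed.

Lemma biginf_le {I : Type} (f : I -> L) (i : I) : le (biginf L f) (f i).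
Proof. apply inf_lb. eauto. Qed.

Lemma le_biginf {I : Type} (f : I -> L) (y : L) :
  (forall i, le y (f i)) -> le y (biginf L f).
Proof. intro Hf. apply inf_greatest. intros x [i ->]. apply Hf. Qed.

Lemma le_biimp (x y z : L) :
  le (mul z x) y -> le (mul z y) x -> le z (biimp x y).
Proof.
  intros Hxy Hyx. apply inf_greatest. intros w [-> | ->]; apply adjoint; assumption.
Qed.

Lemma biimp_one_le (x : L) : le (biimp x one) x.
Proof.
  apply le_trans with (res one x); [apply inf_lb; auto|].
  rewrite <- (mul1 L (res one x)). apply adjoint. apply le_refl.
Qed.

Lemma le_fcomp3 {X Y Z W : Type} (R : frel L X Y) (S : frel L Y Z) (T : frel L Z W)
  x y z t : le (mul (mul (R x y) (S y z)) (T z t)) (fcomp L (fcomp L R S) T x t).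
Proof.
  apply le_bigsup with z. apply mul_le_mono_r. apply le_bigsup with y. apply le_refl.
Qed.

End ResiduatedLattice.

Section NaturalRelation.
Variables (L : CRL) (A : Type) (E : frel L A A).
Hypothesis hE : fuzzy_equiv L E.

Let E_refl : forall a, E a a = one := proj1 hE.
Let E_sym : forall a b, E a b = E b a := proj1 (proj2 hE).
Let E_trans : forall a b c, le (mul (E a b) (E b c)) (E a c) := proj2 (proj2 hE).

Lemma repr_cls (a : A) : E (repr L (cls L E a)) = E a.
Proof.
  unfold repr. destruct (constructive_indefinite_description _ _) as [r Hr].
  symmetry. exact Hr.
Qed.

Lemma natural_cls (a1 a2 : A) : natural L E a1 (cls L E a2) = E a1 a2.
Proof. unfold natural. rewrite E_sym, repr_cls. apply E_sym. Qed.

Lemma natural_cls_diag (a : A) : natural L E a (cls L E a) = one.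
Proof. rewrite natural_cls. apply E_refl. Qed.

Lemma fuzzy_equiv_le_biimp (a b x : A) : le (E a b) (biimp (E a x) (E b x)).
Proof.
  apply le_biimp.
  - rewrite (E_sym a b). apply E_trans.
  - apply E_trans.
Qed.

Lemma natural_le_cokernel (x : A) (c1 c2 : quot L E) :
  le (mul (natural L E x c1) (natural L E x c2)) (cokernel L (natural L E) c1 c2).
Proof.
  unfold natural, cokernel. apply le_biginf. intro x'.
  apply le_trans with (E (repr L c1) (repr L c2)).
  - rewrite (E_sym x). apply E_trans.
  - rewrite (E_sym x' (repr L c1)), (E_sym x' (repr L c2)). apply fuzzy_equiv_le_biimp.
Qed.

Lemma uniform_natural : uniform L (natural L E).
Proof.
  split; [|split].
  - intro a. exists (cls L E a). apply natural_cls_diag.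
  - intro c. exists (repr L c). apply E_refl.
  - apply natural_le_cokernel.
Qed.

Lemma kernel_natural (a1 a2 : A) : kernel L (natural L E) a1 a2 = E a1 a2.
Proof.
  apply le_antisym.
  - apply le_trans with (biimp (natural L E a1 (cls L E a2)) (natural L E a2 (cls L E a2))).
    + apply (biginf_le L (fun c => biimp _ _)).
    + rewrite natural_cls, natural_cls_diag. apply biimp_one_le.
  - apply le_biginf. intro c. apply fuzzy_equiv_le_biimp.
Qed.

Lemma le_quot_rel (V : frel L A A) (c1 c2 : quot L E) (a b : A) :
  le (mul (mul (E (repr L c1) a) (V a b)) (E b (repr L c2))) (quot_rel L E V c1 c2).
Proof. apply le_fcomp3. Qed.

Lemma natural_WL21 {I : Type} (V : I -> frel L A A) :
  WL21 L V (fun i => quot_rel L E (V i)) (natural L E).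
Proof.
  intros i c a. apply bigsup_le. intro y.
  apply le_bigsup with (cls L E a). unfold finv.
  rewrite natural_cls_diag, mul1.
  apply le_trans with (mul (mul (E (repr L c) y) (V i y a)) (E a (repr L (cls L E a)))).
  - fold (natural L E a (cls L E a)). rewrite natural_cls_diag, mul1.
    unfold natural. rewrite E_sym. apply le_refl.
  - apply le_quot_rel.
Qed.

Lemma natural_WL22 {I : Type} (V : I -> frel L A A) :
  WL22 L V (fun i => quot_rel L E (V i)) (natural L E).
Proof.
  intros i a c. apply bigsup_le. intro y.
  apply le_bigsup with (cls L E a). rewrite natural_cls_diag, mul1l.
  apply le_trans with (mul (mul (E (repr L (cls L E a)) a) (V i a y)) (E y (repr L c))).
  - rewrite repr_cls, E_refl, mul1l. apply le_refl.
  - apply le_quot_rel.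
Qed.

End NaturalRelation.

Theorem theorem6p1 (L : CRL) (A I : Type) (hA : inhabited A) (hI : inhabited I)
  (V : I -> frel L A A) (E : frel L A A) (hE : fuzzy_equiv L E) :
  uniform L (natural L E) /\
  (forall a1 a2, kernel L (natural L E) a1 a2 = E a1 a2) /\
  WL21 L V (fun i => quot_rel L E (V i)) (natural L E) /\
  WL22 L V (fun i => quot_rel L E (V i)) (natural L E).
Proof.
  split; [|split; [|split]].
  - exact (uniform_natural L A E hE).
  - exact (kernel_natural L A E hE).
  - exact (natural_WL21 L A E hE V).
  - exact (natural_WL22 L A E hE V).
Qed.
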